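(* Let $A,A_0>0$ and let $\tilde w_A\in C((-\infty,0])$ be $\tilde w_A(x)=\min\{A\sinh x+\cosh x-1,0\}$. For $\varepsilon\in(0,1)$ set $\tilde c_\varepsilon=-\dfrac{A-A_0}{\log\varepsilon}$ and let $\tilde w_{A,\varepsilon}$ be the local solution of the shooting problem $$-\tilde c_\varepsilon w'=(\varepsilon+\Phi_\varepsilon^2(w))w''+\Phi_\varepsilon(w)(1-\Phi_\varepsilon^2(w))\sqrt{\varepsilon+\Phi_\varepsilon^2(w)}\ \ (x<0),\qquad w(0)=0,\ w'(0)=A_0,$$ continued as long as it stays bounded. Then, as $\varepsilon\to0$, $\tilde w_{A,\varepsilon}\to\tilde w_A$ in $C_{\mathrm{loc}}((-\log\frac{1+A}{1-A},0])$ if $0<A<1$, and in $C_{\mathrm{loc}}((-\infty,0])$ if $A>1$.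
   Context: For $\varepsilon>0$, $U_\varepsilon(\phi)=2\int_0^\phi\sqrt{\varepsilon+s^2}\,ds$ is strictly increasing, odd and onto $\mathbb R$; $\Phi_\varepsilon$ denotes its inverse. $C_{\mathrm{loc}}$ convergence on an interval $I$ means uniform convergence on every compact subset of $I$ (on which the functions are defined for $\varepsilon$ small). *)

From Stdlib Require Import Reals Lra ClassicalEpsilon.
From Coquelicot Require Import Coquelicot.
Open Scope R_scope.

Definition U_eps (eps phi : R) : R :=
  2 * RInt (fun s => sqrt (eps + s ^ 2)) 0 phi.

(* Phi_eps = inverse of U_eps (U_eps is a strictly increasing bijection of R
   for eps > 0, so this choice is the unique preimage). *)
Definition Phi_eps (eps w : R) : R :=
  epsilon (inhabits 0) (fun phi => U_eps eps phi = w).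

Definition w_tilde (A x : R) : R := Rmin (A * sinh x + cosh x - 1) 0.

Definition c_tilde (A A0 eps : R) : R := - (A - A0) / ln eps.

(* w is the maximal solution, on (a,0], of
     -c w' = (eps + Phi^2(w)) w'' + Phi(w)(1 - Phi^2(w)) sqrt(eps + Phi^2(w))  (x<0),
     w(0)=0, w'(0)=A0,
   with derivatives dw, ddw; maximal = continued as long as it stays bounded. *)
Definition is_shooting_solution (A A0 eps : R) (a : Rbar) (w dw ddw : R -> R) : Prop :=
  Rbar_lt a 0 /\
  w 0 = 0 /\
  filterlim w (at_left 0) (locally 0) /\
  filterlim dw (at_left 0) (locally A0) /\
  (forall x, Rbar_lt a x -> x < 0 ->
     is_derive w x (dw x) /\ is_derive dw x (ddw x) /\
     let p := Phi_eps eps (w x) in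
     - c_tilde A A0 eps * dw x
       = (eps + p ^ 2) * ddw x + p * (1 - p ^ 2) * sqrt (eps + p ^ 2)) /\
  (a = m_infty \/
   ~ (exists M, forall x, Rbar_lt a x -> x <= 0 -> Rabs (w x) <= M)).

(* C_loc((L,0]) convergence as eps -> 0+ of the family w eps (defined on (a eps, 0])
   to f: on every compact [x0,0] with L < x0 the functions are eventually defined
   and converge uniformly. *)
Definition cloc_conv (L : Rbar) (a : R -> Rbar) (w : R -> R -> R) (f : R -> R) : Prop :=
  forall x0, Rbar_lt L x0 -> x0 <= 0 ->
  forall eta, 0 < eta ->
  exists delta, 0 < delta /\
    forall eps, 0 < eps -> eps < 1 -> eps < delta ->
      Rbar_lt (a eps) x0 /\
      forall x, x0 <= x <= 0 -> Rabs (w eps x - f x) < eta.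

(** Write [p = Phi_eps eps w] and [c = c_tilde A A0 eps].  Since
    [Phi_eps' = 1 / (2 sqrt (eps + p^2))], dividing the equation by [eps + p^2] gives
    [(w' + c hlog p)' = - source p], while the limit profile [W = A sinh + cosh - 1]
    solves [W'' = 1 + W], [W 0 = 0], [W' 0 = A].  Where [p <= - q < 0],
    [c hlog p = A0 - A + O (1 / |ln eps|)] and [source p = - (1 + w) + O (sqrt eps)], so
    [e = w - W] and [D = w' + c hlog p - W' - (A0 - A)] satisfy [e' = D + K], [D' = e - r]
    with small [K] and [r], and the energy [e^2 + D^2] obeys a backward Gronwall inequality.
    Near [x = 0] the errors are merely bounded; but there [A + K >= min A A0 / 2] forces
    [w' >= m > 0], so [w <= m x] and [p] reaches [- q] within a time [O (q^2)], too short
    for the bounded errors to matter.  A downward continuity argument then keeps [w] close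
    to [W] on [[x0, 0]] as long as [W < 0] on [[x0, 0)], i.e. [(1 + A) e^x0 > 1 - A]; the
    resulting bound on [w] also excludes blow-up before [x0]. *)

From Stdlib Require Import Reals Lra Psatz Classical ClassicalEpsilon Ranalysis5.
From Coquelicot Require Import Coquelicot.
Open Scope R_scope.

Lemma continuity_pt_of_is_derive (f : R -> R) x d :
  is_derive f x d -> continuity_pt f x.
Proof.
  intros H. apply continuity_pt_filterlim.
  apply (@ex_derive_continuous R_AbsRing R_NormedModule). eexists; eauto.
Qed.

Lemma le_of_derive_nonneg (f df : R -> R) a b :
  a <= b ->
  (forall x, a <= x <= b -> is_derive f x (df x)) ->
  (forall x, a <= x <= b -> 0 <= df x) -> f a <= f b.
Proof.
  intros Hab Hd Hp.
  destruct (Req_dec a b) as [->|Hne]; [lra|].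
  destruct (MVT_gen f a b df) as [c [Hc Heq]];
    rewrite ?Rmin_left, ?Rmax_right in * by lra.
  - intros x Hx. apply Hd. lra.
  - intros x Hx. apply continuity_pt_of_is_derive with (df x). apply Hd. lra.
  - assert (0 <= df c) by (apply Hp; lra). nra.
Qed.

Lemma exp_le a b : a <= b -> exp a <= exp b.
Proof.
  intros [H | ->]; [left; apply exp_increasing; auto | lra].
Qed.

Lemma ln_neg x : 0 < x < 1 -> ln x < 0.
Proof. intros Hx. rewrite <- ln_1. apply ln_increasing; lra. Qed.

Lemma Rabs_lt_of_ball x (d : posreal) z : ball x d z -> Rabs (z - x) < d.
Proof. auto. Qed.

Lemma ball_of_Rabs_lt x (d : posreal) z : Rabs (z - x) < d -> ball x d z.
Proof. auto. Qed.

Lemma ln_sqrt x : 0 < x -> ln (sqrt x) = ln x / 2.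
Proof.
  intros Hx. assert (Hs : 0 < sqrt x) by (apply sqrt_lt_R0; auto).
  assert (H := ln_mult _ _ Hs Hs). rewrite sqrt_sqrt in H by lra. lra.
Qed.

Section LeftLimits.

Context {T : Type} {F : (T -> Prop) -> Prop} {FF : Filter F}.

Lemma filterlim_Rplus (f g : T -> R) a b :
  filterlim f F (locally a) -> filterlim g F (locally b) ->
  filterlim (fun x => f x + g x) F (locally (a + b)).
Proof.
  intros Hf Hg.
  exact (filterlim_comp_2 f g Rplus Hf Hg (@filterlim_plus R_AbsRing R_NormedModule a b)).
Qed.

Lemma filterlim_Rmult (f g : T -> R) a b :
  filterlim f F (locally a) -> filterlim g F (locally b) ->
  filterlim (fun x => f x * g x) F (locally (a * b)).
Proof.
  intros Hf Hg. exact (filterlim_comp_2 f g Rmult Hf Hg (@filterlim_mult R_AbsRing a b)).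
Qed.

Lemma filterlim_continuity_pt (f : T -> R) (h : R -> R) a :
  filterlim f F (locally a) -> continuity_pt h a ->
  filterlim (fun x => h (f x)) F (locally (h a)).
Proof.
  intros Hf Hh. apply filterlim_comp with (G := locally a); auto.
  apply continuity_pt_filterlim; auto.
Qed.

End LeftLimits.

Lemma filterlim_at_left_id x : filterlim (fun z : R => z) (at_left x) (locally x).
Proof. intros P HP. exact (filter_le_within _ P HP). Qed.

Lemma filterlim_at_left_continuity_pt (h : R -> R) x :
  continuity_pt h x -> filterlim h (at_left x) (locally (h x)).
Proof. intros H. exact (filterlim_continuity_pt _ h x (filterlim_at_left_id x) H). Qed.

Lemma le_left_limit_of_derive_ge (f df : R -> R) lo l y : y < 0 ->
  (forall z, y <= z < 0 -> is_derive f z (df z)) ->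
  (forall z, y <= z < 0 -> lo <= df z) ->
  filterlim f (at_left 0) (locally l) -> f y <= l + lo * y.
Proof.
  intros Hy Hd Hlo Hf.
  assert (Hlim : filterlim (fun z => f z + - lo * z) (at_left 0) (locally (l + - lo * 0))).
  { apply filterlim_Rplus; auto.
    apply filterlim_Rmult; [apply filterlim_const | apply filterlim_at_left_id]. }
  assert (Hev : at_left 0 (fun z => f y + - lo * y <= f z + - lo * z)).
  { exists (mkposreal (- y) ltac:(lra)). intros z Hz Hz0.
    assert (y < z).
    { apply Rabs_lt_of_ball in Hz. cbn [pos] in Hz. rewrite Rabs_left in Hz; lra. }
    apply (le_of_derive_nonneg (fun x => f x + - lo * x) (fun x => df x + - lo)); [lra| |].
    - intros x Hx. apply (is_derive_plus f (fun x => - lo * x)); [apply Hd; lra|].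
      auto_derive; auto; ring.
    - intros x Hx. assert (lo <= df x) by (apply Hlo; lra). lra. }
  assert (H := filterlim_le (F := at_left 0) _ _ (Finite _) (Finite _) Hev
                (filterlim_const (f y + - lo * y)) Hlim).
  simpl in H. lra.
Qed.

Lemma abs_le_left_limit_of_abs_derive_le (f df : R -> R) C y : y < 0 ->
  (forall z, y <= z < 0 -> is_derive f z (df z)) ->
  (forall z, y <= z < 0 -> Rabs (df z) <= C) ->
  filterlim f (at_left 0) (locally 0) -> Rabs (f y) <= C * (- y).
Proof.
  intros Hy Hd HC Hf. apply Rabs_le. split.
  - assert (H : - f y <= - 0 + - C * y); [|lra].
    apply (le_left_limit_of_derive_ge (fun z => - f z) (fun z => - df z)); auto.
    + intros z Hz. apply (is_derive_opp f). apply Hd; auto.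
    + intros z Hz. assert (H := HC z Hz). apply Rabs_le_between in H. lra.
    + exact (filterlim_continuity_pt f Ropp 0 Hf (continuity_pt_opp _ _ (continuity_pt_id 0))).
  - assert (H : f y <= 0 + - C * y); [|lra].
    apply (le_left_limit_of_derive_ge f df); auto.
    intros z Hz. assert (H := HC z Hz). apply Rabs_le_between in H. lra.
Qed.

Lemma downward_real_induction (S : R -> Prop) s : s <= 0 -> S 0 ->
  (forall m, s <= m < 0 -> (forall z, m < z <= 0 -> S z) -> S m) ->
  (forall m, s < m <= 0 -> (forall z, m <= z <= 0 -> S z) ->
     exists t, s <= t < m /\ forall z, t <= z <= 0 -> S z) ->
  forall z, s <= z <= 0 -> S z.
Proof.
  intros Hs H0 Hclosed Hopen.
  set (E := fun u => s <= - u <= 0 /\ forall z, - u <= z <= 0 -> S z).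
  assert (HE0 : E 0) by (split; [lra | intros z Hz; replace z with 0 by lra; auto]).
  assert (Hb : bound E) by (exists (- s); intros u [Hu _]; lra).
  destruct (completeness E Hb (ex_intro _ 0 HE0)) as [M [HMub HMlub]].
  assert (HM0 : 0 <= M) by (apply HMub; auto).
  assert (HMs : M <= - s) by (apply HMlub; intros u [Hu _]; lra).
  assert (Hright : forall z, - M < z <= 0 -> S z).
  { intros z Hz. apply NNPP. intros HSz.
    assert (M <= - z); [|lra].
    apply HMlub. intros u [Hu HSu]. destruct (Rle_dec u (- z)) as [|Hn]; auto.
    exfalso. apply HSz, HSu. lra. }
  assert (Hall : forall z, - M <= z <= 0 -> S z).
  { intros z Hz. destruct (Req_dec z (- M)) as [->|Hne]; [|apply Hright; lra].
    destruct (Req_dec M 0) as [->|HM]; [rewrite Ropp_0; auto|].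
    apply Hclosed; [lra | auto]. }
  destruct (Req_dec M (- s)) as [HMs'|HMs'].
  - intros z Hz. apply Hall. lra.
  - destruct (Hopen (- M) ltac:(lra) Hall) as [t [Ht HSt]].
    assert (- t <= M) by (apply HMub; split; [lra | intros z Hz; apply HSt; lra]).
    lra.
Qed.

Lemma le_mul_exp_opp X Y k : X * exp k <= Y -> X <= Y * exp (- k).
Proof.
  intros H. assert (Hp := exp_pos k).
  assert (Hm : exp k * exp (- k) = 1) by (rewrite <- exp_plus, Rplus_opp_r; apply exp_0).
  apply (Rmult_le_reg_r (exp k)); auto.
  rewrite Rmult_assoc, (Rmult_comm (exp (- k))), Hm. lra.
Qed.

Lemma continuity_pt_ex_delta (f : R -> R) x e : continuity_pt f x -> 0 < e ->
  exists d, 0 < d /\ forall z, Rabs (z - x) < d -> Rabs (f z - f x) < e.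
Proof.
  intros Hc He. destruct (Hc e He) as [d [Hd H]].
  exists d. split; auto. intros z Hz.
  destruct (Req_dec z x) as [->|Hne]; [rewrite Rminus_eq_0, Rabs_R0; auto|].
  apply (H z). split; [split; [exact I | auto] | exact Hz].
Qed.

Lemma le_of_continuity_pt_at_right (h : R -> R) x c rho : continuity_pt h x -> 0 < rho ->
  (forall z, x < z < x + rho -> h z <= c) -> h x <= c.
Proof.
  intros Hc Hrho H.
  assert (Hlim : filterlim h (at_right x) (locally (h x))).
  { apply (filterlim_filter_le_1 (F := locally x)); [apply filter_le_within|].
    apply continuity_pt_filterlim; auto. }
  assert (Hev : at_right x (fun z => h z <= c)).
  { exists (mkposreal rho Hrho). intros z Hz Hxz. apply H.
    apply Rabs_lt_of_ball in Hz. cbn [pos] in Hz. rewrite Rabs_right in Hz; lra. }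
  exact (filterlim_le (F := at_right x) _ _ (Finite _) (Finite _) Hev Hlim (filterlim_const c)).
Qed.

Lemma filterlim_abs_lt {T} {F : (T -> Prop) -> Prop} (f : T -> R) l e : 0 < e ->
  filterlim f F (locally l) -> F (fun x => Rabs (f x - l) < e).
Proof.
  intros He Hf. apply (Hf (fun y => Rabs (y - l) < e)).
  exists (mkposreal e He). intros y Hy. exact Hy.
Qed.

Lemma at_left_ex_delta x (P : R -> Prop) : at_left x P ->
  exists d, 0 < d /\ forall z, x - d < z < x -> P z.
Proof.
  intros [d Hd]. exists d. split; [apply cond_pos|]. intros z Hz. apply Hd; [|lra].
  apply ball_of_Rabs_lt. rewrite Rabs_left; lra.
Qed.

(** * The potential [U_eps] and its inverse [Phi_eps] *)

Section Potential.

Variable eps : R.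
Hypothesis eps_pos : 0 < eps.

Lemma sqrt_eps_pos : 0 < sqrt eps.
Proof. apply sqrt_lt_R0; lra. Qed.

Lemma sqrt_eps_sq_bounds x :
  let s := sqrt (eps + x ^ 2) in
  s * s = eps + x ^ 2 /\ Rabs x < s /\ sqrt eps <= s <= sqrt eps + Rabs x.
Proof.
  intros s.
  assert (Hx : 0 <= x ^ 2) by nra.
  assert (Hss : s * s = eps + x ^ 2) by (apply sqrt_sqrt; lra).
  assert (Hs : 0 <= s) by apply sqrt_pos.
  assert (He : sqrt eps * sqrt eps = eps) by (apply sqrt_sqrt; lra).
  assert (He0 := sqrt_eps_pos).
  assert (Ha : Rabs x * Rabs x = x ^ 2) by (rewrite <- Rabs_mult, Rabs_right; nra).
  assert (0 <= Rabs x) by apply Rabs_pos.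
  repeat split; nra.
Qed.

Lemma continuous_sqrt_eps_sq y : continuous (fun s => sqrt (eps + s ^ 2)) y.
Proof. apply (@ex_derive_continuous R_AbsRing R_NormedModule). auto_derive. nra. Qed.

Lemma U_eps_derive p : is_derive (U_eps eps) p (2 * sqrt (eps + p ^ 2)).
Proof.
  apply is_derive_scal.
  apply (is_derive_RInt (fun s => sqrt (eps + s ^ 2))
           (fun b => RInt (fun s => sqrt (eps + s ^ 2)) 0 b) 0 p).
  - apply filter_forall. intros b. apply (@RInt_correct R_CompleteNormedModule).
    apply ex_RInt_continuous. intros z _. apply continuous_sqrt_eps_sq.
  - apply continuous_sqrt_eps_sq.
Qed.

Lemma U_eps_0 : U_eps eps 0 = 0.
Proof. unfold U_eps. rewrite RInt_point. unfold zero; simpl; ring. Qed.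

Lemma U_eps_sub_ge (g dg : R -> R) p1 p2 : p1 <= p2 ->
  (forall y, p1 <= y <= p2 -> is_derive g y (dg y)) ->
  (forall y, p1 <= y <= p2 -> dg y <= 2 * sqrt (eps + y ^ 2)) ->
  g p2 - g p1 <= U_eps eps p2 - U_eps eps p1.
Proof.
  intros Hp Hg Hdg.
  enough (U_eps eps p1 - g p1 <= U_eps eps p2 - g p2) by lra.
  apply (le_of_derive_nonneg (fun y => U_eps eps y - g y)
           (fun y => 2 * sqrt (eps + y ^ 2) - dg y)); auto.
  - intros y Hy. apply (is_derive_minus (U_eps eps) g); auto using U_eps_derive.
  - intros y Hy. specialize (Hdg y Hy). lra.
Qed.

Lemma U_eps_sub_le (g dg : R -> R) p1 p2 : p1 <= p2 ->
  (forall y, p1 <= y <= p2 -> is_derive g y (dg y)) ->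
  (forall y, p1 <= y <= p2 -> 2 * sqrt (eps + y ^ 2) <= dg y) ->
  U_eps eps p2 - U_eps eps p1 <= g p2 - g p1.
Proof.
  intros Hp Hg Hdg.
  enough (- g p2 - - g p1 <= - U_eps eps p2 - - U_eps eps p1) by lra.
  apply (U_eps_sub_ge (fun y => - g y + 2 * U_eps eps y)
           (fun y => - dg y + 2 * (2 * sqrt (eps + y ^ 2)))) in Hp; [lra| |].
  - intros y Hy. apply (is_derive_plus (fun y => - g y)); [apply (is_derive_opp g); auto|].
    apply is_derive_scal, U_eps_derive.
  - intros y Hy. specialize (Hdg y Hy). lra.
Qed.

Lemma U_eps_sub_lower p1 p2 : p1 <= p2 ->
  2 * sqrt eps * (p2 - p1) <= U_eps eps p2 - U_eps eps p1.
Proof.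
  intros Hp.
  replace (2 * sqrt eps * (p2 - p1)) with (2 * sqrt eps * p2 - 2 * sqrt eps * p1) by ring.
  apply (U_eps_sub_ge _ (fun _ => 2 * sqrt eps)); auto.
  - intros y _. auto_derive; auto; ring.
  - intros y _. destruct (sqrt_eps_sq_bounds y) as (_ & _ & ? & _). lra.
Qed.

Lemma U_eps_bounds_nonneg p : 0 <= p ->
  p ^ 2 <= U_eps eps p <= p ^ 2 + 2 * sqrt eps * p.
Proof.
  intros Hp. rewrite <- (Rminus_0_r (U_eps eps p)), <- U_eps_0. split.
  - replace (p ^ 2) with (p ^ 2 - 0 ^ 2) by ring.
    apply (U_eps_sub_ge (fun y => y ^ 2) (fun y => 2 * y)); auto.
    + intros y _. auto_derive; auto; ring.
    + intros y Hy. destruct (sqrt_eps_sq_bounds y) as (_ & ? & _).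
      rewrite Rabs_right in * by lra. lra.
  - replace (p ^ 2 + 2 * sqrt eps * p)
      with ((p ^ 2 + 2 * sqrt eps * p) - (0 ^ 2 + 2 * sqrt eps * 0)) by ring.
    apply (U_eps_sub_le (fun y => y ^ 2 + 2 * sqrt eps * y) (fun y => 2 * y + 2 * sqrt eps)); auto.
    + intros y _. auto_derive; auto; ring.
    + intros y Hy. destruct (sqrt_eps_sq_bounds y) as (_ & _ & _ & ?).
      rewrite Rabs_right in * by lra. lra.
Qed.

Lemma U_eps_bounds_nonpos p : p <= 0 ->
  - p ^ 2 + 2 * sqrt eps * p <= U_eps eps p <= - p ^ 2.
Proof.
  intros Hp. replace (U_eps eps p) with (- (U_eps eps 0 - U_eps eps p)) by (rewrite U_eps_0; ring).
  split.
  - replace (- p ^ 2 + 2 * sqrt eps * p)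
      with (- ((- 0 ^ 2 + 2 * sqrt eps * 0) - (- p ^ 2 + 2 * sqrt eps * p))) by ring.
    apply Ropp_le_contravar.
    apply (U_eps_sub_le (fun y => - y ^ 2 + 2 * sqrt eps * y)
             (fun y => - (2 * y) + 2 * sqrt eps)); auto.
    + intros y _. auto_derive; auto; ring.
    + intros y Hy. destruct (sqrt_eps_sq_bounds y) as (_ & _ & _ & ?).
      rewrite Rabs_left1 in * by lra. lra.
  - replace (- p ^ 2) with (- (- 0 ^ 2 - - p ^ 2)) by ring.
    apply Ropp_le_contravar.
    apply (U_eps_sub_ge (fun y => - y ^ 2) (fun y => - (2 * y))); auto.
    + intros y _. auto_derive; auto; ring.
    + intros y Hy. destruct (sqrt_eps_sq_bounds y) as (_ & ? & _).
      rewrite Rabs_left1 in * by lra. lra.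
Qed.

Lemma U_eps_continuity_pt p : continuity_pt (U_eps eps) p.
Proof. exact (continuity_pt_of_is_derive _ _ _ (U_eps_derive p)). Qed.

Lemma U_eps_surjective w : exists p, U_eps eps p = w.
Proof.
  assert (Hc : continuity (U_eps eps)) by exact U_eps_continuity_pt.
  destruct (Rle_lt_dec 0 w) as [Hw|Hw].
  - destruct (U_eps_bounds_nonneg (sqrt w) (sqrt_pos w)) as [H _].
    rewrite <- Rsqr_pow2, Rsqr_sqrt in H by lra.
    destruct (IVT_gen (U_eps eps) 0 (sqrt w) w Hc) as [x [_ Hx]]; eauto.
    rewrite U_eps_0, Rmin_left, Rmax_right; lra.
  - assert (Hs := sqrt_pos (- w)).
    destruct (U_eps_bounds_nonpos (- sqrt (- w))) as [_ H]; [lra|].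
    replace ((- sqrt (- w)) ^ 2) with (Rsqr (sqrt (- w))) in H by (unfold Rsqr; ring).
    rewrite Rsqr_sqrt in H by lra.
    destruct (IVT_gen (U_eps eps) (- sqrt (- w)) 0 w Hc) as [x [_ Hx]]; eauto.
    rewrite U_eps_0, Rmin_left, Rmax_right; lra.
Qed.

Lemma U_eps_Phi_eps w : U_eps eps (Phi_eps eps w) = w.
Proof.
  exact (epsilon_spec (inhabits 0) (fun phi => U_eps eps phi = w) (U_eps_surjective w)).
Qed.

Lemma U_eps_lt p1 p2 : p1 < p2 -> U_eps eps p1 < U_eps eps p2.
Proof.
  intros Hp. assert (H := U_eps_sub_lower p1 p2 ltac:(lra)).
  assert (Hs := sqrt_eps_pos). nra.
Qed.

Lemma Phi_eps_le_compat w1 w2 : w1 <= w2 -> Phi_eps eps w1 <= Phi_eps eps w2.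
Proof.
  intros Hw. apply Rnot_lt_le. intros Hlt.
  apply U_eps_lt in Hlt. rewrite !U_eps_Phi_eps in Hlt. lra.
Qed.

Lemma Phi_eps_U_eps p : Phi_eps eps (U_eps eps p) = p.
Proof.
  set (q := Phi_eps eps (U_eps eps p)).
  assert (Hq : U_eps eps q = U_eps eps p) by apply U_eps_Phi_eps.
  destruct (Rtotal_order q p) as [H|[H|H]]; auto; apply U_eps_lt in H; lra.
Qed.

Lemma Phi_eps_0 : Phi_eps eps 0 = 0.
Proof. rewrite <- U_eps_0 at 1. apply Phi_eps_U_eps. Qed.

Lemma Phi_eps_lipschitz w1 w2 :
  2 * sqrt eps * Rabs (Phi_eps eps w1 - Phi_eps eps w2) <= Rabs (w1 - w2).
Proof.
  rewrite <- (U_eps_Phi_eps w1) at 2. rewrite <- (U_eps_Phi_eps w2) at 2.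
  set (p1 := Phi_eps eps w1). set (p2 := Phi_eps eps w2).
  assert (Hs := sqrt_eps_pos).
  destruct (Rle_dec p1 p2) as [H|H].
  - assert (Ha := U_eps_sub_lower p1 p2 H).
    rewrite !Rabs_left1 by nra. nra.
  - assert (Ha := U_eps_sub_lower p2 p1 ltac:(lra)).
    rewrite !Rabs_right by nra. nra.
Qed.

Lemma Phi_eps_continuity_pt w : continuity_pt (Phi_eps eps) w.
Proof.
  assert (Hs := sqrt_eps_pos).
  intros e He. exists (2 * sqrt eps * e). split; [nra|].
  intros x [_ Hx]. simpl in *. unfold R_dist in *.
  assert (H := Phi_eps_lipschitz x w).
  apply (Rmult_lt_reg_l (2 * sqrt eps)); nra.
Qed.

Lemma Phi_eps_derive w :
  is_derive (Phi_eps eps) w (/ (2 * sqrt (eps + Phi_eps eps w ^ 2))).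
Proof.
  apply is_derive_Reals.
  assert (Prf : forall p, Phi_eps eps (w - 1) <= p <= Phi_eps eps (w + 1) ->
                          derivable_pt (U_eps eps) p).
  { intros p _. exists (2 * sqrt (eps + p ^ 2)). apply is_derive_Reals, U_eps_derive. }
  assert (Hin : Phi_eps eps (w - 1) <= Phi_eps eps w <= Phi_eps eps (w + 1))
    by (split; apply Phi_eps_le_compat; lra).
  assert (Hd : derive_pt (U_eps eps) (Phi_eps eps w) (Prf (Phi_eps eps w) Hin)
               = 2 * sqrt (eps + Phi_eps eps w ^ 2))
    by (apply derive_pt_eq_0, is_derive_Reals, U_eps_derive).
  assert (H := derivable_pt_lim_recip_interv (U_eps eps) (Phi_eps eps) (w - 1) (w + 1) w Prf
                 (Phi_eps_continuity_pt w) ltac:(lra) ltac:(lra) Hin).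
  rewrite Hd in H.
  destruct (sqrt_eps_sq_bounds (Phi_eps eps w)) as (_ & Hpos & _).
  assert (Ha := Rabs_pos (Phi_eps eps w)).
  replace (/ (2 * sqrt (eps + Phi_eps eps w ^ 2)))
    with (1 / (2 * sqrt (eps + Phi_eps eps w ^ 2))) by (field; lra).
  apply H; [intros x _; apply U_eps_Phi_eps | lra].
Qed.

Lemma Phi_eps_nonpos w : w <= 0 -> Phi_eps eps w <= 0.
Proof. intros Hw. rewrite <- Phi_eps_0. apply Phi_eps_le_compat; auto. Qed.

Lemma Phi_eps_sq_le_abs w : Phi_eps eps w ^ 2 <= Rabs w.
Proof.
  rewrite <- (U_eps_Phi_eps w) at 2. set (p := Phi_eps eps w).
  assert (Hs := sqrt_eps_pos).
  destruct (Rle_dec 0 p) as [H|H].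
  - destruct (U_eps_bounds_nonneg p H). rewrite Rabs_right; nra.
  - destruct (U_eps_bounds_nonpos p ltac:(lra)). rewrite Rabs_left1; nra.
Qed.

Lemma Phi_eps_abs_le B w : Rabs w <= B -> Rabs (Phi_eps eps w) <= B + 1.
Proof.
  intros Hw. assert (H := Phi_eps_sq_le_abs w).
  assert (Ha := Rabs_pos (Phi_eps eps w)).
  assert (Rabs (Phi_eps eps w) ^ 2 = Phi_eps eps w ^ 2)
    by (rewrite <- !Rsqr_pow2; symmetry; apply Rsqr_abs).
  nra.
Qed.

Lemma Phi_eps_le_opp q w : 0 <= q -> w <= - (2 * q ^ 2 + eps) -> Phi_eps eps w <= - q.
Proof.
  intros Hq Hw. rewrite <- (Phi_eps_U_eps (- q)). apply Phi_eps_le_compat.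
  destruct (U_eps_bounds_nonpos (- q)) as [H _]; [lra|].
  assert (Hss : sqrt eps * sqrt eps = eps) by (apply sqrt_sqrt; lra).
  assert (0 <= (q - sqrt eps) ^ 2) by apply pow2_ge_0.
  nra.
Qed.

End Potential.

(** * The limit profile *)

Definition wlim (A x : R) : R := A * sinh x + cosh x - 1.
Definition dwlim (A x : R) : R := A * cosh x + sinh x.

Lemma wlim_derive A x : is_derive (wlim A) x (dwlim A x).
Proof. unfold wlim, dwlim, sinh, cosh. auto_derive; auto. field. Qed.

Lemma dwlim_derive A x : is_derive (dwlim A) x (1 + wlim A x).
Proof. unfold wlim, dwlim, sinh, cosh. auto_derive; auto. field. Qed.

Lemma wlim_0 A : wlim A 0 = 0.
Proof. unfold wlim, sinh, cosh. rewrite Ropp_0, exp_0. field. Qed.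

Lemma dwlim_0 A : dwlim A 0 = A.
Proof. unfold dwlim, sinh, cosh. rewrite Ropp_0, exp_0. field. Qed.

Lemma wlim_factor A x :
  wlim A x = (exp x - 1) * ((1 + A) * exp x - (1 - A)) / (2 * exp x).
Proof.
  unfold wlim, sinh, cosh. assert (H := exp_pos x). rewrite exp_Ropp. field. lra.
Qed.

Lemma wlim_le_neg A x0 x tau : 0 < A -> 0 < (1 + A) * exp x0 - (1 - A) ->
  0 <= tau -> x0 <= x <= - tau ->
  wlim A x <= - ((1 - exp (- tau)) * ((1 + A) * exp x0 - (1 - A)) / 2).
Proof.
  intros HA Hb Htau Hx. rewrite wlim_factor.
  assert (Ht0 := exp_pos x).
  assert (Ht1 : exp x <= exp (- tau)) by (apply exp_le; lra).
  assert (Ht2 : exp x0 <= exp x) by (apply exp_le; lra).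
  assert (Hte : exp (- tau) <= 1) by (rewrite <- exp_0; apply exp_le; lra).
  set (t := exp x) in *. set (b := (1 + A) * exp x0 - (1 - A)) in *.
  assert (Hbt : b <= (1 + A) * t - (1 - A)) by (unfold b; nra).
  apply (Rmult_le_reg_r (2 * t)); [lra|]. field_simplify; [|lra].
  assert (0 <= (1 - exp (- tau)) * b) by (apply Rmult_le_pos; lra).
  assert ((1 - exp (- tau)) * b * t <= (1 - t) * ((1 + A) * t - (1 - A))) by nra.
  nra.
Qed.

Lemma wlim_nonpos A x0 x : 0 < A -> 0 < (1 + A) * exp x0 - (1 - A) -> x0 <= x <= 0 ->
  wlim A x <= 0.
Proof.
  intros HA Hb Hx. assert (H := wlim_le_neg A x0 x 0 HA Hb ltac:(lra) ltac:(lra)).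
  rewrite Ropp_0, exp_0 in H. lra.
Qed.

Lemma w_tilde_eq_wlim A x0 x : 0 < A -> 0 < (1 + A) * exp x0 - (1 - A) -> x0 <= x <= 0 ->
  w_tilde A x = wlim A x.
Proof. intros HA Hb Hx. apply Rmin_left, (wlim_nonpos A x0); auto. Qed.

Lemma wlim_abs_le A x0 x : 0 < A -> 0 < (1 + A) * exp x0 - (1 - A) -> x0 <= x <= 0 ->
  Rabs (wlim A x) <= A * exp (- x0).
Proof.
  intros HA Hb Hx. rewrite Rabs_left1 by (apply (wlim_nonpos A x0); auto).
  unfold wlim, sinh, cosh.
  assert (Hx1 : exp x <= 1) by (rewrite <- exp_0; apply exp_le; lra).
  assert (Hx2 : exp (- x) <= exp (- x0)) by (apply exp_le; lra).
  assert (Hx3 := exp_pos x).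
  assert (Hm : exp x * exp (- x) = 1) by (rewrite <- exp_plus, Rplus_opp_r; apply exp_0).
  assert (Hc : 2 <= exp x + exp (- x)) by nra.
  assert (A * exp (- x) <= A * exp (- x0)) by nra.
  nra.
Qed.

Lemma dwlim_sub_abs_le A y : 0 <= A -> -1 <= y <= 0 -> Rabs (dwlim A y - A) <= 3 * (A + 1) * (- y).
Proof.
  intros HA Hy. destruct (Req_dec y 0) as [->|Hy0].
  { rewrite dwlim_0, Rminus_eq_0, Rabs_R0. lra. }
  apply (abs_le_left_limit_of_abs_derive_le (fun z => dwlim A z - A) (fun z => 1 + wlim A z)
           (3 * (A + 1))); [lra | | |].
  - intros z _. replace (1 + wlim A z) with (1 + wlim A z - 0) by ring.
    apply (is_derive_minus (dwlim A) (fun _ => A));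
      [apply dwlim_derive | apply (@is_derive_const R_AbsRing)].
  - intros z Hz. unfold wlim, sinh, cosh.
    assert (H1 : exp z <= exp (- z)) by (apply exp_le; lra).
    assert (H2 : exp (- z) <= 3) by (eapply Rle_trans; [apply exp_le | apply exp_le_3]; lra).
    assert (H3 := exp_pos z).
    apply Rabs_le. split; nra.
  - assert (Hc : continuity_pt (fun z => dwlim A z - A) 0).
    { apply continuity_pt_minus; [|apply continuity_pt_const; intros u v; auto].
      apply continuity_pt_of_is_derive with (1 + wlim A 0), dwlim_derive. }
    assert (H := filterlim_at_left_continuity_pt _ 0 Hc).
    simpl in H. rewrite dwlim_0, Rminus_eq_0 in H. exact H.
Qed.

(** * Logarithmic and source terms *)

(* [hlog eps u = 2 arsinh (u / sqrt eps)], the primitive of [2 / sqrt (eps + u^2)]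
   vanishing at 0. *)
Definition hlog (eps u : R) : R := 2 * ln (u + sqrt (eps + u ^ 2)) - ln eps.
Definition source (eps p : R) : R := p * (1 - p ^ 2) / sqrt (eps + p ^ 2).

Definition drift_error (A A0 eps p : R) : R := - c_tilde A A0 eps * hlog eps p - (A - A0).
Definition source_error (eps w : R) : R := source eps (Phi_eps eps w) + 1 + w.

Section Logarithm.

Variable eps : R.
Hypothesis eps_pos : 0 < eps.

Lemma hlog_arg_pos u : 0 < u + sqrt (eps + u ^ 2).
Proof.
  destruct (sqrt_eps_sq_bounds eps eps_pos u) as (_ & H & _).
  assert (- u <= Rabs u) by (rewrite <- Rabs_Ropp; apply RRle_abs). lra.
Qed.

Lemma hlog_derive u : is_derive (hlog eps) u (2 / sqrt (eps + u ^ 2)).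
Proof.
  unfold hlog. assert (Ha := hlog_arg_pos u).
  destruct (sqrt_eps_sq_bounds eps eps_pos u) as (Hss & Hs & _).
  assert (Hu := Rabs_pos u).
  auto_derive; replace (u * (u * 1)) with (u ^ 2) by ring.
  - repeat split; lra || nra.
  - field. lra.
Qed.

Lemma hlog_0 : hlog eps 0 = 0.
Proof.
  unfold hlog.
  replace (0 + sqrt (eps + 0 ^ 2)) with (sqrt eps) by (f_equal; ring_simplify; f_equal; ring).
  rewrite ln_sqrt by auto. lra.
Qed.

Lemma hlog_opp u : hlog eps (- u) = - hlog eps u.
Proof.
  unfold hlog. replace ((- u) ^ 2) with (u ^ 2) by ring.
  assert (H1 := hlog_arg_pos u). assert (H2 := hlog_arg_pos (- u)).
  replace ((- u) ^ 2) with (u ^ 2) in H2 by ring.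
  destruct (sqrt_eps_sq_bounds eps eps_pos u) as (Hss & _).
  assert (Hm : (- u + sqrt (eps + u ^ 2)) * (u + sqrt (eps + u ^ 2)) = eps) by nra.
  assert (H := ln_mult _ _ H2 H1). rewrite Hm in H. lra.
Qed.

Lemma hlog_nonneg_bounds P u : eps < 1 -> 0 <= u <= P ->
  0 <= hlog eps u <= 2 * ln (2 * P + 1) - ln eps.
Proof.
  intros He1 Hu. unfold hlog.
  destruct (sqrt_eps_sq_bounds eps eps_pos u) as (_ & _ & Hl & Hr).
  assert (sqrt eps <= 1) by (rewrite <- sqrt_1; apply sqrt_le_1_alt; lra).
  assert (Hs := sqrt_eps_pos eps eps_pos).
  rewrite Rabs_right in Hr by lra.
  assert (ln (sqrt eps) <= ln (u + sqrt (eps + u ^ 2))) by (apply ln_le; lra).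
  assert (ln (u + sqrt (eps + u ^ 2)) <= ln (2 * P + 1)) by (apply ln_le; lra).
  rewrite ln_sqrt in * by auto. lra.
Qed.

Lemma hlog_ge q u : 0 < q <= u -> 2 * ln q - ln eps <= hlog eps u.
Proof.
  intros Hq. unfold hlog.
  destruct (sqrt_eps_sq_bounds eps eps_pos u) as (_ & Hl & _).
  assert (Ha := Rabs_pos u).
  assert (ln q <= ln (u + sqrt (eps + u ^ 2))) by (apply ln_le; lra). lra.
Qed.

Lemma source_abs_le p : Rabs (source eps p) <= 1 + p ^ 2.
Proof.
  unfold source. destruct (sqrt_eps_sq_bounds eps eps_pos p) as (_ & Hl & _).
  assert (Ha := Rabs_pos p).
  rewrite Rabs_div, Rabs_mult, (Rabs_right (sqrt _)) by lra.
  assert (Rabs (1 - p ^ 2) <= 1 + p ^ 2) by (apply Rabs_le; nra).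
  assert (0 <= Rabs (1 - p ^ 2)) by apply Rabs_pos.
  apply (Rmult_le_reg_r (sqrt (eps + p ^ 2))); [lra|]. field_simplify; nra.
Qed.

Lemma source_error_abs_le_crude w : Rabs (source_error eps w) <= 2 + 2 * Rabs w.
Proof.
  unfold source_error.
  assert (H1 := source_abs_le (Phi_eps eps w)).
  assert (H2 := Phi_eps_sq_le_abs eps eps_pos w).
  assert (H3 := Rabs_triang (source eps (Phi_eps eps w) + 1) w).
  assert (H4 := Rabs_triang (source eps (Phi_eps eps w)) 1).
  rewrite Rabs_R1 in H4. lra.
Qed.

Lemma source_error_abs_le q P w : 0 < q -> Phi_eps eps w <= - q ->
  Rabs (Phi_eps eps w) <= P ->
  Rabs (source_error eps w) <= sqrt eps * ((1 + P ^ 2) / q + 2 * P).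
Proof.
  intros Hq Hp HP. unfold source_error, source.
  destruct (U_eps_bounds_nonpos eps eps_pos (Phi_eps eps w) ltac:(lra)) as [Hw1 Hw2].
  rewrite U_eps_Phi_eps in Hw1, Hw2 by auto.
  set (p := Phi_eps eps w) in *.
  destruct (sqrt_eps_sq_bounds eps eps_pos p) as (Hss & Ha & Hb & Hc).
  assert (Hd := sqrt_eps_pos eps eps_pos).
  set (s := sqrt (eps + p ^ 2)) in *.
  rewrite Rabs_left in Ha, Hc, HP by lra.
  set (Q := - p) in *. assert (HQ : Q = - p) by reflexivity.
  replace (p * (1 - p ^ 2) / s + 1 + w)
    with ((1 - Q ^ 2) * ((s - Q) / s) + (Q ^ 2 + w)) by (unfold Q; field; lra).
  assert (T1 : 0 <= (s - Q) / s) by (apply Rdiv_le_0_compat; lra).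
  assert (T2 : (s - Q) / s <= sqrt eps / q).
  { apply Rle_trans with (sqrt eps / s).
    - apply Rmult_le_compat_r; [left; apply Rinv_0_lt_compat|]; lra.
    - apply Rmult_le_compat_l; [lra|]. apply Rinv_le_contravar; lra. }
  assert (T3 : Rabs (1 - Q ^ 2) <= 1 + P ^ 2).
  { assert (Q * Q <= P * P) by (apply Rmult_le_compat; lra). apply Rabs_le; nra. }
  assert (T4 : Rabs (Q ^ 2 + w) <= 2 * sqrt eps * P).
  { replace (Q ^ 2) with (p ^ 2) by (unfold Q; ring). apply Rabs_le.
    assert (sqrt eps * Q <= sqrt eps * P) by (apply Rmult_le_compat_l; lra).
    unfold Q in *. lra. }
  eapply Rle_trans; [apply Rabs_triang|]. rewrite Rabs_mult, (Rabs_right ((s - Q) / s)) by lra.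
  assert (Rabs (1 - Q ^ 2) * ((s - Q) / s) <= (1 + P ^ 2) * (sqrt eps / q))
    by (apply Rmult_le_compat; auto using Rabs_pos).
  replace (sqrt eps * ((1 + P ^ 2) / q + 2 * P))
    with ((1 + P ^ 2) * (sqrt eps / q) + 2 * sqrt eps * P) by (field; lra).
  lra.
Qed.

End Logarithm.

Lemma drift_error_nonpos A A0 eps u : 0 < eps < 1 -> u <= 0 ->
  drift_error A A0 eps u = (A - A0) * (hlog eps (- u) / (- ln eps) - 1).
Proof.
  intros He Hu. unfold drift_error, c_tilde.
  assert (Hl := ln_neg eps He).
  rewrite hlog_opp by lra. field. lra.
Qed.

Lemma drift_error_nonneg A A0 eps u : 0 < eps < 1 ->
  drift_error A A0 eps u = - (A - A0) * (hlog eps u / (- ln eps) + 1).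
Proof.
  intros He. unfold drift_error, c_tilde.
  assert (Hl := ln_neg eps He).
  field. lra.
Qed.

(** * Smallness as [eps -> 0] *)

Lemma eventually_pos_lt s : 0 < s -> at_right 0 (fun eps => 0 < eps < s).
Proof.
  intros Hs. exists (mkposreal s Hs). intros eps Heps Hpos.
  apply Rabs_lt_of_ball in Heps. cbn [pos] in Heps. rewrite Rminus_0_r, Rabs_right in Heps; lra.
Qed.

Lemma eventually_eps_small : at_right 0 (fun eps => 0 < eps < 1).
Proof. exact (eventually_pos_lt 1 Rlt_0_1). Qed.

Lemma eventually_sqrt_le s : 0 < s -> at_right 0 (fun eps => sqrt eps <= s).
Proof.
  intros Hs. apply (filter_imp (fun eps => 0 < eps < s ^ 2)); [|apply eventually_pos_lt; nra].
  intros eps He. rewrite <- (sqrt_pow2 s) by lra. apply sqrt_le_1_alt; lra.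
Qed.

Lemma eventually_le_opp_ln N : at_right 0 (fun eps => N <= - ln eps).
Proof.
  apply (filter_imp (fun eps => ln eps < - N)); [intros; lra|].
  apply (is_lim_ln_0 (fun y => y < - N)). exists (- N). auto.
Qed.

Lemma eventually_of_opp_ln_ge N (Q : R -> Prop) :
  (forall eps, 0 < eps < 1 -> N <= - ln eps -> Q eps) -> at_right 0 Q.
Proof.
  intros H. apply (filter_imp (fun eps => 0 < eps < 1 /\ N <= - ln eps)).
  - intros eps [He HN]. auto.
  - apply filter_and; [apply eventually_eps_small | apply eventually_le_opp_ln].
Qed.

Lemma hlog_abs_ratio_bounds eps P u : 0 < eps < 1 -> Rabs u <= P ->
  0 <= hlog eps (Rabs u) / (- ln eps) <= 1 + 2 * ln (2 * P + 1) / (- ln eps).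
Proof.
  intros He Hu.
  assert (Hl := ln_neg eps He).
  assert (Ha := Rabs_pos u).
  destruct (hlog_nonneg_bounds eps ltac:(lra) P (Rabs u) ltac:(lra) ltac:(lra)) as [H1 H2].
  split; [apply Rdiv_le_0_compat; lra|].
  apply Rle_div_l; [lra|]. field_simplify; lra.
Qed.

Lemma drift_error_abs_form A A0 eps u : 0 < eps < 1 ->
  let s := hlog eps (Rabs u) / (- ln eps) in
  drift_error A A0 eps u = (A - A0) * (s - 1) \/
  drift_error A A0 eps u = - (A - A0) * (s + 1).
Proof.
  intros He s. destruct (Rle_dec u 0) as [Hu|Hu].
  - left. rewrite drift_error_nonpos by auto. unfold s. rewrite Rabs_left1 by lra. ring.
  - right. rewrite drift_error_nonneg by auto. unfold s. rewrite Rabs_right by lra. ring.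
Qed.

Lemma eventually_drift_error_bounded A A0 P : 0 <= P ->
  at_right 0 (fun eps => forall u, Rabs u <= P ->
    Rabs (drift_error A A0 eps u) <= 3 * Rabs (A - A0)).
Proof.
  intros HP.
  apply (eventually_of_opp_ln_ge (2 * ln (2 * P + 1))). intros eps He HN u Hu.
  destruct (hlog_abs_ratio_bounds eps P u He Hu) as [Hs1 Hs2].
  assert (2 * ln (2 * P + 1) / (- ln eps) <= 1).
  { assert (Hl := ln_neg eps He).
    apply Rle_div_l; lra. }
  assert (Habs := Rabs_pos (A - A0)).
  destruct (drift_error_abs_form A A0 eps u He) as [-> | ->];
    rewrite Rabs_mult, ?Rabs_Ropp; [assert (Rabs (hlog eps (Rabs u) / - ln eps - 1) <= 1)
                                   | assert (Rabs (hlog eps (Rabs u) / - ln eps + 1) <= 3)];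
    try (apply Rabs_le; lra); nra.
Qed.

Lemma eventually_drift_error_ge A A0 P : 0 < A -> 0 < A0 -> 0 <= P ->
  at_right 0 (fun eps => forall u, u <= 0 -> Rabs u <= P ->
    Rmin A A0 / 2 <= A + drift_error A A0 eps u).
Proof.
  intros HA HA0 HP.
  assert (Hmin : 0 < Rmin A A0) by (apply Rmin_pos; auto).
  apply (eventually_of_opp_ln_ge (Rabs (A - A0) * (2 * ln (2 * P + 1)) / (Rmin A A0 / 2))).
  intros eps He HN u Hu0 Hu.
  assert (Hl := ln_neg eps He).
  destruct (hlog_abs_ratio_bounds eps P u He Hu) as [Hs1 Hs2].
  set (rho := 2 * ln (2 * P + 1) / (- ln eps)) in *.
  assert (Hrho : Rabs (A - A0) * rho <= Rmin A A0 / 2).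
  { unfold rho. replace (Rabs (A - A0) * (2 * ln (2 * P + 1) / - ln eps))
      with (Rabs (A - A0) * (2 * ln (2 * P + 1)) / - ln eps) by (field; lra).
    apply Rle_div_l; [lra|]. apply Rle_div_l in HN; [lra|lra]. }
  rewrite drift_error_nonpos by auto. rewrite Rabs_left1 in Hs1, Hs2 by auto.
  set (s := hlog eps (- u) / (- ln eps)) in *.
  destruct (Rle_dec A0 A) as [H|H].
  - rewrite Rmin_right in * by lra. nra.
  - rewrite Rmin_left in * by lra. rewrite Rabs_left in Hrho by lra. nra.
Qed.

Lemma eventually_drift_error_small A A0 P q k : 0 < q -> 0 < k ->
  at_right 0 (fun eps => forall u, u <= - q -> Rabs u <= P ->
    Rabs (drift_error A A0 eps u) <= k).
Proof.
  intros Hq Hk.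
  set (c := 2 * (Rabs (ln (2 * P + 1)) + Rabs (ln q))).
  apply (eventually_of_opp_ln_ge (Rabs (A - A0) * c / k)). intros eps He HN u Hu0 Hu.
  assert (Hl := ln_neg eps He).
  rewrite Rabs_left1 in Hu by lra.
  assert (Hlo := hlog_ge eps ltac:(lra) q (- u) ltac:(lra)).
  destruct (hlog_nonneg_bounds eps ltac:(lra) P (- u) ltac:(lra) ltac:(lra)) as [_ Hhi].
  assert (Hd : Rabs (hlog eps (- u) - - ln eps) <= c).
  { assert (H1 := RRle_abs (ln (2 * P + 1))). assert (H2 := RRle_abs (- ln q)).
    assert (H3 := Rabs_pos (ln (2 * P + 1))). assert (H4 := Rabs_pos (ln q)).
    rewrite Rabs_Ropp in H2. unfold c. apply Rabs_le; lra. }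
  rewrite drift_error_nonpos by (auto; lra).
  replace (hlog eps (- u) / - ln eps - 1) with ((hlog eps (- u) - - ln eps) / - ln eps)
    by (field; lra).
  unfold Rdiv. rewrite !Rabs_mult, Rabs_inv, (Rabs_right (- ln eps)) by lra.
  assert (Habs := Rabs_pos (A - A0)).
  apply Rle_trans with (Rabs (A - A0) * c / - ln eps).
  - unfold Rdiv. rewrite Rmult_assoc. apply Rmult_le_compat_l; auto.
    apply Rmult_le_compat_r; [left; apply Rinv_0_lt_compat|]; lra.
  - apply Rle_div_l; [lra|]. apply Rle_div_l in HN; lra.
Qed.

Lemma eventually_source_error_small P q k : 0 < q -> 0 < k -> 0 <= P ->
  at_right 0 (fun eps => forall w, Phi_eps eps w <= - q -> Rabs (Phi_eps eps w) <= P ->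
    Rabs (source_error eps w) <= k).
Proof.
  intros Hq Hk HP.
  set (C := (1 + P ^ 2) / q + 2 * P).
  assert (HC : 0 < C).
  { unfold C. assert (0 < (1 + P ^ 2) / q) by (apply Rdiv_lt_0_compat; nra). lra. }
  apply (filter_imp (fun eps => 0 < eps < 1 /\ sqrt eps <= k / C)).
  - intros eps [He Hs] w Hp HpP.
    eapply Rle_trans; [apply (source_error_abs_le eps ltac:(lra) q P w); auto|].
    fold C. apply Rle_div_r in Hs; lra.
  - apply filter_and; [apply eventually_eps_small | apply eventually_sqrt_le].
    apply Rdiv_lt_0_compat; auto.
Qed.

Lemma eventually_Phi_eps_le_opp q : 0 < q ->
  at_right 0 (fun eps => forall u, u <= - (3 * q ^ 2) -> Phi_eps eps u <= - q).
Proof.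
  intros Hq. apply (filter_imp (fun eps => 0 < eps < q ^ 2)).
  - intros eps He u Hu. apply Phi_eps_le_opp; lra.
  - apply eventually_pos_lt; nra.
Qed.

Lemma at_right_ex_delta (Q : R -> Prop) : at_right 0 Q ->
  exists delta, 0 < delta /\ forall eps, 0 < eps < delta -> Q eps.
Proof.
  intros [d Hd]. exists d. split; [apply cond_pos|]. intros eps He. apply Hd; [|lra].
  apply ball_of_Rabs_lt. rewrite Rminus_0_r, Rabs_right; lra.
Qed.

(** * Energy along a solution *)

Lemma is_derive_exp_weight (Z : R -> R) dZ mu x : is_derive Z x dZ ->
  is_derive (fun x => (Z x + mu / 4) * exp (4 * x)) x ((dZ + 4 * Z x + mu) * exp (4 * x)).
Proof.
  intros H.
  replace ((dZ + 4 * Z x + mu) * exp (4 * x))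
    with ((dZ + 0) * exp (4 * x) + (Z x + mu / 4) * (4 * exp (4 * x))) by field.
  apply (is_derive_mult (fun x => Z x + mu / 4) (fun x => exp (4 * x))).
  - apply (is_derive_plus Z (fun _ => mu / 4)); auto. apply (@is_derive_const R_AbsRing).
  - auto_derive; auto; ring.
  - intros; apply Rmult_comm.
Qed.

Lemma gronwall_backward (Z dZ : R -> R) mu y z : y <= z ->
  (forall x, y <= x <= z -> is_derive Z x (dZ x)) ->
  (forall x, y <= x <= z -> 0 <= dZ x + 4 * Z x + mu) ->
  (Z y + mu / 4) * exp (4 * y) <= (Z z + mu / 4) * exp (4 * z).
Proof.
  intros Hyz Hd Hineq.
  apply (le_of_derive_nonneg (fun x => (Z x + mu / 4) * exp (4 * x))
           (fun x => (dZ x + 4 * Z x + mu) * exp (4 * x))); auto.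
  - intros x Hx. apply is_derive_exp_weight, Hd; auto.
  - intros x Hx. apply Rmult_le_pos; [auto | left; apply exp_pos].
Qed.

Lemma gronwall_backward_left_limit (Z dZ : R -> R) mu y : y < 0 ->
  (forall x, y <= x < 0 -> is_derive Z x (dZ x)) ->
  (forall x, y <= x < 0 -> 0 <= dZ x + 4 * Z x + mu) ->
  filterlim Z (at_left 0) (locally 0) ->
  (Z y + mu / 4) * exp (4 * y) <= mu / 4.
Proof.
  intros Hy Hd Hineq HZ.
  enough ((Z y + mu / 4) * exp (4 * y) <= (0 + mu / 4) * exp (4 * 0) + 0 * y)
    by (rewrite Rmult_0_r, exp_0 in *; lra).
  apply (le_left_limit_of_derive_ge (fun x => (Z x + mu / 4) * exp (4 * x))
           (fun x => (dZ x + 4 * Z x + mu) * exp (4 * x))); auto.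
  - intros x Hx. apply is_derive_exp_weight, Hd; auto.
  - intros x Hx. apply Rmult_le_pos; [auto | left; apply exp_pos].
  - apply filterlim_Rmult; [apply filterlim_Rplus; [auto | apply filterlim_const]|].
    apply filterlim_at_left_continuity_pt with (h := fun x => exp (4 * x)).
    apply continuity_pt_of_is_derive with (4 * exp (4 * 0)). auto_derive; auto; ring.
Qed.

Section Energy.

Variables (A A0 eps : R) (w dw ddw : R -> R).
Hypothesis eps_pos : 0 < eps.

Definition ode_at (x : R) : Prop :=
  is_derive w x (dw x) /\ is_derive dw x (ddw x) /\
  (let p := Phi_eps eps (w x) in
   - c_tilde A A0 eps * dw x = (eps + p ^ 2) * ddw x + p * (1 - p ^ 2) * sqrt (eps + p ^ 2)).

Definition err (x : R) : R := w x - wlim A x.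
Definition defect (x : R) : R :=
  dw x + c_tilde A A0 eps * hlog eps (Phi_eps eps (w x)) - dwlim A x - (A0 - A).
Definition energy (x : R) : R := err x ^ 2 + defect x ^ 2.

Lemma err_derive x : ode_at x ->
  is_derive err x (defect x + drift_error A A0 eps (Phi_eps eps (w x))).
Proof.
  intros [Hw _]. unfold err.
  replace (defect x + drift_error A A0 eps (Phi_eps eps (w x))) with (dw x - dwlim A x)
    by (unfold defect, drift_error; ring).
  apply (is_derive_minus w (wlim A)); auto using wlim_derive.
Qed.

Lemma defect_derive x : ode_at x ->
  is_derive defect x (err x - source_error eps (w x)).
Proof.
  intros (Hw & Hv & Ho). cbv zeta in Ho.
  set (p := Phi_eps eps (w x)) in *.
  destruct (sqrt_eps_sq_bounds eps eps_pos p) as (Hss & Hs & _).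
  assert (Ha := Rabs_pos p).
  set (s := sqrt (eps + p ^ 2)) in *.
  assert (Hh : is_derive (fun y => hlog eps (Phi_eps eps (w y))) x
                 (dw x * / (2 * s) * (2 / s))).
  { apply (is_derive_comp (hlog eps) (fun y => Phi_eps eps (w y))); [apply hlog_derive; auto|].
    apply (is_derive_comp (Phi_eps eps) w); auto. apply Phi_eps_derive; auto. }
  unfold defect.
  replace (err x - source_error eps (w x))
    with (ddw x + c_tilde A A0 eps * (dw x * / (2 * s) * (2 / s)) - (1 + wlim A x) - 0).
  - apply (is_derive_minus _ (fun _ => A0 - A)); [|apply (@is_derive_const R_AbsRing)].
    apply (is_derive_minus _ (dwlim A)); [|apply dwlim_derive].
    apply (is_derive_plus dw); auto. apply is_derive_scal; auto.
  - unfold err, source_error, source. fold p s.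
    assert (Hd : ddw x = (- c_tilde A A0 eps * dw x - p * (1 - p ^ 2) * s) / (s * s))
      by (rewrite Hss, Ho; field; nra).
    rewrite Hd. field. lra.
Qed.

Definition energy_rate (x : R) : R :=
  2 * err x * (defect x + drift_error A A0 eps (Phi_eps eps (w x))) +
  2 * defect x * (err x - source_error eps (w x)).

Lemma energy_derive x : ode_at x -> is_derive energy x (energy_rate x).
Proof.
  intros Hx. unfold energy, energy_rate.
  replace (2 * err x * (defect x + drift_error A A0 eps (Phi_eps eps (w x))) +
           2 * defect x * (err x - source_error eps (w x)))
    with (INR 2 * (defect x + drift_error A A0 eps (Phi_eps eps (w x))) * err x ^ 1 +
          INR 2 * (err x - source_error eps (w x)) * defect x ^ 1) by (simpl; ring).
  apply (is_derive_plus (fun y => err y ^ 2) (fun y => defect y ^ 2));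
    apply is_derive_pow; auto using err_derive, defect_derive.
Qed.

Lemma energy_rate_ge x mu :
  drift_error A A0 eps (Phi_eps eps (w x)) ^ 2 + source_error eps (w x) ^ 2 <= mu ->
  0 <= energy_rate x + 4 * energy x + mu.
Proof.
  unfold energy_rate, energy.
  set (e := err x). set (D := defect x).
  set (K := drift_error A A0 eps (Phi_eps eps (w x))). set (r := source_error eps (w x)).
  intros Hmu.
  assert (H1 := pow2_ge_0 (e + K)). assert (H2 := pow2_ge_0 (D - r)).
  assert (H3 := pow2_ge_0 e). assert (H4 := pow2_ge_0 D). assert (H5 := pow2_ge_0 (e + D)).
  nra.
Qed.

Hypothesis w_left_limit : filterlim w (at_left 0) (locally 0).
Hypothesis dw_left_limit : filterlim dw (at_left 0) (locally A0).

Lemma err_left_limit : filterlim err (at_left 0) (locally 0).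
Proof.
  assert (HW := filterlim_at_left_continuity_pt (wlim A) 0
                  (continuity_pt_of_is_derive _ _ _ (wlim_derive A 0))).
  rewrite wlim_0 in HW.
  assert (H := filterlim_Rplus _ _ _ _ w_left_limit
    (filterlim_continuity_pt _ Ropp 0 HW (continuity_pt_opp _ _ (continuity_pt_id 0)))).
  rewrite Ropp_0, Rplus_0_r in H. exact H.
Qed.

Lemma defect_left_limit : filterlim defect (at_left 0) (locally 0).
Proof.
  assert (HP := filterlim_continuity_pt w _ 0 w_left_limit (Phi_eps_continuity_pt eps eps_pos 0)).
  rewrite Phi_eps_0 in HP by auto.
  assert (HH := filterlim_continuity_pt _ _ 0 HP
                  (continuity_pt_of_is_derive _ _ _ (hlog_derive eps eps_pos 0))).
  rewrite hlog_0 in HH by auto.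
  assert (HV := filterlim_at_left_continuity_pt (dwlim A) 0
                  (continuity_pt_of_is_derive _ _ _ (dwlim_derive A 0))).
  rewrite dwlim_0 in HV.
  assert (H := filterlim_Rplus _ _ _ _
                 (filterlim_Rplus _ _ _ _ dw_left_limit
                    (filterlim_Rmult _ _ _ _ (filterlim_const (c_tilde A A0 eps)) HH))
                 (filterlim_Rplus _ _ _ _ (filterlim_Rmult _ _ _ _ (filterlim_const (-1)) HV)
                    (filterlim_const (- (A0 - A))))).
  replace (A0 + c_tilde A A0 eps * 0 + (-1 * A + - (A0 - A))) with 0 in H by ring.
  eapply filterlim_ext; [|exact H]. intros x. unfold defect. simpl. ring.
Qed.

Lemma energy_left_limit : filterlim energy (at_left 0) (locally 0).
Proof.
  assert (He := err_left_limit). assert (HD := defect_left_limit).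
  assert (H := filterlim_Rplus _ _ _ _ (filterlim_Rmult _ _ _ _ He He)
                                       (filterlim_Rmult _ _ _ _ HD HD)).
  replace (0 * 0 + 0 * 0) with 0 in H by ring.
  eapply filterlim_ext; [|exact H]. intros x. unfold energy. simpl. ring.
Qed.

End Energy.

(** * A priori estimate *)

Section Apriori.

Variables (A A0 eps : R) (a : Rbar) (w dw ddw : R -> R).
Hypothesis eps_pos : 0 < eps.
Hypothesis A0_pos : 0 < A0.
Hypothesis w_0 : w 0 = 0.
Hypothesis w_left_limit : filterlim w (at_left 0) (locally 0).
Hypothesis dw_left_limit : filterlim dw (at_left 0) (locally A0).
Hypothesis solves : forall x : R, Rbar_lt a x -> x < 0 -> ode_at A A0 eps w dw ddw x.

Variables (x0 tau Tq q m M CD muI mus etab : R).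
Hypothesis x0_nonpos : x0 <= 0.
Hypothesis etab_pos : 0 < etab.
Hypothesis m_pos : 0 < m.
Hypothesis Tq_range : 0 < Tq <= tau.
Hypothesis muI_nonneg : 0 <= muI.
Hypothesis mus_nonneg : 0 <= mus.
Hypothesis wlim_bound : forall y, x0 <= y <= 0 -> Rabs (wlim A y) + etab <= M.
Hypothesis source_bound : forall u y, Rabs u <= M -> x0 <= y <= 0 ->
  Rabs (source eps (Phi_eps eps u) + 1 + wlim A y) <= CD.
Hypothesis slope_bound : forall u, Rabs u <= M -> u <= 0 ->
  2 * m <= A + drift_error A A0 eps (Phi_eps eps u).
Hypothesis dwlim_near_0 : forall y, - tau <= y <= 0 -> Rabs (dwlim A y - A) + CD * (- y) <= m.
Hypothesis wlim_far : forall y, x0 <= y <= - tau -> wlim A y <= - (2 * etab).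
Hypothesis Phi_far : forall u, u <= - (m * Tq) -> Phi_eps eps u <= - q.
Hypothesis mTq_le : m * Tq <= etab.
Hypothesis errors_bound : forall u, Rabs u <= M ->
  drift_error A A0 eps (Phi_eps eps u) ^ 2 + source_error eps u ^ 2 <= muI.
Hypothesis errors_small : forall u, Rabs u <= M -> Phi_eps eps u <= - q ->
  drift_error A A0 eps (Phi_eps eps u) ^ 2 + source_error eps u ^ 2 <= mus.
Hypothesis gronwall_budget :
  (muI / 4 * (exp (4 * Tq) - 1) + mus / 4) * exp (- 4 * x0) <= etab ^ 2 / 4.

Notation err := (err A w).
Notation defect := (defect A A0 eps w dw).
Notation energy := (energy A A0 eps w dw).

(* [weak_bounds] on [[t, 0]] improve to [strong_bounds] there ([strong_on]); the gain
   is what lets the continuity argument in [apriori_bound] move [t] further left. *)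
Definition weak_bounds (y : R) : Prop :=
  Rabs (err y) <= etab /\ (- tau <= y -> w y <= 0).
Definition strong_bounds (y : R) : Prop :=
  Rabs (err y) <= etab / 2 /\ (- tau <= y -> w y <= m * y).

Lemma err_0 : err 0 = 0.
Proof. unfold err. rewrite w_0, wlim_0. ring. Qed.

Section Step.

Variable t : R.
Hypothesis a_lt_t : Rbar_lt a t.
Hypothesis t_range : x0 <= t <= 0.
Hypothesis weak_on : forall y, t <= y <= 0 -> weak_bounds y.

Lemma ode_on z : t <= z < 0 -> ode_at A A0 eps w dw ddw z.
Proof.
  intros Hz. apply solves; [apply (Rbar_lt_le_trans a t); [exact a_lt_t | simpl] |]; lra.
Qed.

Lemma w_abs_le y : t <= y <= 0 -> Rabs (w y) <= M.
Proof.
  intros Hy. destruct (weak_on y Hy) as [Herr _]. unfold err in Herr.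
  assert (H := wlim_bound y ltac:(lra)).
  replace (w y) with ((w y - wlim A y) + wlim A y) by ring.
  eapply Rle_trans; [apply Rabs_triang | lra].
Qed.

Lemma defect_abs_le y : t <= y < 0 -> Rabs (defect y) <= CD * (- y).
Proof.
  intros Hy.
  apply (abs_le_left_limit_of_abs_derive_le _ (fun z => err z - source_error eps (w z)));
    [lra | | | apply (defect_left_limit A A0 eps w dw); auto].
  - intros z Hz. apply (defect_derive A A0 eps w dw ddw); auto. apply ode_on; lra.
  - intros z Hz. unfold err, source_error.
    replace (w z - wlim A z - (source eps (Phi_eps eps (w z)) + 1 + w z))
      with (- (source eps (Phi_eps eps (w z)) + 1 + wlim A z)) by ring.
    rewrite Rabs_Ropp. apply source_bound; [apply w_abs_le |]; lra.
Qed.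

Lemma dw_ge_slope z : t <= z < 0 -> - tau <= z -> m <= dw z.
Proof.
  intros Hz Hzt.
  replace (dw z) with (defect z + (dwlim A z - A) + (A + drift_error A A0 eps (Phi_eps eps (w z))))
    by (unfold defect, drift_error; ring).
  assert (H1 := defect_abs_le z Hz). apply Rabs_le_between in H1.
  assert (H2 := dwlim_near_0 z ltac:(lra)).
  assert (H3 := proj1 (Rabs_le_between (dwlim A z - A) _) (Rle_refl _)).
  assert (H4 := slope_bound (w z) (w_abs_le z ltac:(lra)) (proj2 (weak_on z ltac:(lra)) Hzt)).
  lra.
Qed.

Lemma w_le_slope y : t <= y <= 0 -> - tau <= y -> w y <= m * y.
Proof.
  intros Hy Hyt. destruct (Req_dec y 0) as [->|Hy0]; [rewrite w_0; lra|].
  enough (w y <= 0 + m * y) by lra.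
  apply (le_left_limit_of_derive_ge w dw); auto; [lra | |].
  - intros z Hz. apply ode_on; lra.
  - intros z Hz. apply dw_ge_slope; lra.
Qed.

Lemma Phi_w_le y : t <= y <= - Tq -> Phi_eps eps (w y) <= - q.
Proof.
  intros Hy. apply Phi_far.
  destruct (Rle_dec (- tau) y) as [Hyt|Hyt].
  - assert (H := w_le_slope y ltac:(lra) Hyt). nra.
  - destruct (weak_on y ltac:(lra)) as [Herr _]. unfold err in Herr.
    apply Rabs_le_between in Herr. assert (H := wlim_far y ltac:(lra)). lra.
Qed.

Lemma energy_le_near_0 y : t <= y < 0 -> - Tq <= y -> energy y <= muI / 4 * (exp (4 * Tq) - 1).
Proof.
  intros Hy Hyq.
  assert (H : (energy y + muI / 4) * exp (4 * y) <= muI / 4).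
  { apply (gronwall_backward_left_limit _ (energy_rate A A0 eps w dw)); [lra | | |].
    - intros x Hx. apply (energy_derive A A0 eps w dw ddw); auto. apply ode_on; lra.
    - intros x Hx. apply energy_rate_ge, errors_bound, w_abs_le. lra.
    - apply (energy_left_limit A A0 eps w dw); auto. }
  apply le_mul_exp_opp in H.
  assert (exp (- (4 * y)) <= exp (4 * Tq)) by (apply exp_le; lra).
  assert (muI / 4 * exp (- (4 * y)) <= muI / 4 * exp (4 * Tq)) by (apply Rmult_le_compat_l; lra).
  lra.
Qed.

Lemma energy_le y : t <= y < 0 -> energy y <= etab ^ 2 / 4.
Proof.
  intros Hy.
  set (B := muI / 4 * (exp (4 * Tq) - 1)).
  assert (HB : 0 <= B).
  { apply Rmult_le_pos; [lra|].
    assert (1 <= exp (4 * Tq)) by (rewrite <- exp_0; apply exp_le; lra). lra. }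
  assert (Hx0 : 1 <= exp (- 4 * x0)) by (rewrite <- exp_0; apply exp_le; lra).
  assert (Hbudget : (B + mus / 4) * exp (- (4 * y)) <= etab ^ 2 / 4).
  { assert (Hg := gronwall_budget). fold B in Hg.
    eapply Rle_trans; [|exact Hg]. apply Rmult_le_compat_l; [lra|].
    apply exp_le. lra. }
  destruct (Rle_dec (- Tq) y) as [Hyq|Hyq].
  - assert (H := energy_le_near_0 y Hy Hyq). fold B in H.
    assert (B <= (B + mus / 4) * exp (- (4 * y))); [|lra].
    assert (1 <= exp (- (4 * y))) by (rewrite <- exp_0; apply exp_le; lra). nra.
  - assert (Hnear := energy_le_near_0 (- Tq) ltac:(lra) ltac:(lra)). fold B in Hnear.
    assert (H : (energy y + mus / 4) * exp (4 * y) <= (energy (- Tq) + mus / 4) * exp (4 * - Tq)).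
    { apply (gronwall_backward _ (energy_rate A A0 eps w dw)); [lra | |].
      - intros x Hx. apply (energy_derive A A0 eps w dw ddw); auto. apply ode_on; lra.
      - intros x Hx. apply energy_rate_ge, errors_small; [apply w_abs_le | apply Phi_w_le]; lra. }
    assert (HZ : 0 <= energy (- Tq)).
    { unfold energy.
      assert (H1 := pow2_ge_0 (err (- Tq))). assert (H2 := pow2_ge_0 (defect (- Tq))). lra. }
    assert (exp (4 * - Tq) <= 1) by (rewrite <- exp_0; apply exp_le; lra).
    assert (H' : (energy y + mus / 4) * exp (4 * y) <= B + mus / 4) by nra.
    apply le_mul_exp_opp in H'.
    assert (Hp := exp_pos (- (4 * y))). nra.
Qed.

Lemma strong_on y : t <= y <= 0 -> strong_bounds y.
Proof.
  intros Hy. split; [|apply w_le_slope; auto].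
  destruct (Req_dec y 0) as [->|Hy0]; [rewrite err_0, Rabs_R0; lra|].
  assert (H := energy_le y ltac:(lra)). unfold energy in H.
  assert (H2 := pow2_ge_0 (defect y)).
  apply Rabs_le. split; nra.
Qed.

End Step.

Lemma strong_bounds_0 : strong_bounds 0.
Proof. split; [rewrite err_0, Rabs_R0; lra | intros; rewrite w_0; lra]. Qed.

Lemma strong_bounds_closed (m0 : R) : Rbar_lt a m0 -> m0 < 0 ->
  (forall z, m0 < z <= 0 -> strong_bounds z) -> strong_bounds m0.
Proof.
  intros Ham0 Hm0 Hright.
  destruct (solves m0 Ham0 Hm0) as [Hw _].
  assert (Herr := continuity_pt_of_is_derive _ _ _
                    (err_derive A A0 eps w dw ddw m0 (solves m0 Ham0 Hm0))).
  split.
  - apply (le_of_continuity_pt_at_right (fun z => Rabs (err z)) m0 _ (- m0));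
      [exact (continuity_pt_comp err Rabs m0 Herr (Rcontinuity_abs _)) | lra |].
    intros z Hz. apply Hright. lra.
  - intros Hm0t.
    enough (w m0 - m * m0 <= 0) by lra.
    apply (le_of_continuity_pt_at_right (fun z => w z - m * z) m0 _ (- m0)); [| lra |].
    + apply continuity_pt_minus; [apply continuity_pt_of_is_derive with (dw m0); auto|].
      apply continuity_pt_scal, continuity_pt_id.
    + intros z Hz. enough (w z <= m * z) by lra. apply Hright; lra.
Qed.

Lemma weak_bounds_near_0 (t : R) : Rbar_lt a t -> t < 0 ->
  exists t', t <= t' < 0 /\ forall z, t' <= z <= 0 -> weak_bounds z.
Proof.
  intros Hat Ht.
  assert (Hev : at_left 0 (fun z => Rabs (err z - 0) < etab /\ Rabs (dw z - A0) < A0)).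
  { apply filter_and; apply filterlim_abs_lt; auto. apply (err_left_limit A w); auto. }
  destruct (at_left_ex_delta 0 _ Hev) as [d [Hd Hdd]].
  exists (Rmax t (- d / 2)). split; [split; [apply Rmax_l | apply Rmax_lub_lt; lra]|].
  intros z Hz. assert (Hmax := Rmax_r t (- d / 2)). assert (Hmax' := Rmax_l t (- d / 2)).
  destruct (Req_dec z 0) as [->|Hz0]; [split; [rewrite err_0, Rabs_R0 | intros; rewrite w_0]; lra|].
  split.
  - destruct (Hdd z ltac:(lra)) as [H _]. rewrite Rminus_0_r in H. lra.
  - intros _. enough (w z <= 0 + 0 * z) by lra.
    apply (le_left_limit_of_derive_ge w dw); auto; [lra | |].
    + intros z' Hz'. apply solves; [apply (Rbar_lt_le_trans a t); [exact Hat | simpl] |]; lra.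
    + intros z' Hz'. destruct (Hdd z' ltac:(lra)) as [_ H].
      apply Rabs_lt_between in H. lra.
Qed.

Lemma weak_bounds_extend (m0 : R) : Rbar_lt a m0 -> m0 < 0 ->
  (forall z, m0 <= z <= 0 -> strong_bounds z) ->
  exists d, 0 < d /\ forall z, m0 - d <= z <= 0 -> weak_bounds z.
Proof.
  intros Ham0 Hm0 Hstrong.
  assert (Hode := solves m0 Ham0 Hm0). destruct Hode as [Hw _].
  assert (Herr_cont := continuity_pt_of_is_derive _ _ _
                         (err_derive A A0 eps w dw ddw m0 (solves m0 Ham0 Hm0))).
  destruct (continuity_pt_ex_delta err m0 (etab / 2) Herr_cont) as [d1 [Hd1 Herr]]; [lra|].
  assert (Hneg : exists d2, 0 < d2 /\
            forall z, Rabs (z - m0) < d2 -> - tau <= z -> z < m0 -> w z <= 0).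
  { destruct (Rlt_dec (- tau) m0) as [Ht|Ht].
    - destruct (Hstrong m0 ltac:(lra)) as [_ Hwm]. specialize (Hwm ltac:(lra)).
      destruct (continuity_pt_ex_delta w m0 (- (m * m0)) (continuity_pt_of_is_derive _ _ _ Hw))
        as [d2 [Hd2 Hwd]]; [nra|].
      exists d2. split; auto. intros z Hz _ _. specialize (Hwd z Hz).
      apply Rabs_lt_between in Hwd. lra.
    - exists 1. split; [lra|]. intros z _ Hz1 Hz2. lra. }
  destruct Hneg as [d2 [Hd2 Hwneg]].
  exists (Rmin d1 d2 / 2). split; [assert (Hmin := Rmin_pos d1 d2 Hd1 Hd2); lra|].
  assert (Hmin1 := Rmin_l d1 d2). assert (Hmin2 := Rmin_r d1 d2).
  intros z Hz. destruct (Rle_dec m0 z) as [Hmz|Hmz].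
  - destruct (Hstrong z ltac:(lra)) as [H1 H2]. split; [lra|].
    intros Hzt. specialize (H2 Hzt). nra.
  - assert (Hzd : Rabs (z - m0) < Rmin d1 d2) by (rewrite Rabs_left; lra).
    split; [|intros Hzt; apply Hwneg; lra].
    destruct (Hstrong m0 ltac:(lra)) as [H1 _]. specialize (Herr z ltac:(lra)).
    replace (err z) with (err m0 + (err z - err m0)) by ring.
    eapply Rle_trans; [apply Rabs_triang | lra].
Qed.

Lemma apriori_bound (t : R) : Rbar_lt a t -> x0 <= t <= 0 ->
  forall y, t <= y <= 0 -> Rabs (w y - wlim A y) <= etab / 2.
Proof.
  intros Hat Ht.
  assert (Ha : forall z : R, t <= z -> Rbar_lt a z)
    by (intros z Hz; apply (Rbar_lt_le_trans a t); [exact Hat | simpl; lra]).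
  enough (H : forall y, t <= y <= 0 -> strong_bounds y) by (intros y Hy; apply (H y Hy)).
  apply downward_real_induction; [lra | apply strong_bounds_0 | |].
  - intros m0 Hm0 Hright. apply strong_bounds_closed; auto; [apply Ha | ]; lra.
  - intros m0 Hm0 Hstrong.
    assert (Hweak : exists t', t <= t' < m0 /\ forall z, t' <= z <= 0 -> weak_bounds z).
    { destruct (Req_dec m0 0) as [->|Hm0'].
      - apply weak_bounds_near_0; auto; lra.
      - destruct (weak_bounds_extend m0) as [d [Hd Hweak]]; auto; [apply Ha; lra | lra |].
        exists (Rmax t (m0 - d)). split; [split; [apply Rmax_l | apply Rmax_lub_lt; lra]|].
        intros z Hz. apply Hweak. assert (Hmax := Rmax_r t (m0 - d)). lra. }
    destruct Hweak as [t' [Ht' Hweak]].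
    exists t'. split; auto. apply (strong_on t'); auto; [apply Ha | ]; lra.
Qed.

End Apriori.

(** * Choice of constants and conclusion *)

(* In [is_shooting_solution] the blow-up alternative quantifies over [x : Rbar]
   (coerced to [R] by [real]), hence the case analysis on [x]. *)
Lemma shooting_lower_end_lt A A0 eps a w dw ddw x0 M : x0 <= 0 ->
  is_shooting_solution A A0 eps a w dw ddw ->
  (forall t : R, Rbar_lt a t -> x0 <= t <= 0 -> forall y, t <= y <= 0 -> Rabs (w y) <= M) ->
  Rbar_lt a x0.
Proof.
  intros Hx0 (Ha0 & Hw0 & _ & _ & _ & Hmax) Hbound.
  destruct a as [al| |]; simpl in *; auto.
  destruct (Rlt_dec al x0) as [H|H]; auto. exfalso.
  destruct Hmax as [Hmi|Hmx]; [discriminate|].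
  apply Hmx. exists M. intros [x| |] Hx1 Hx2; simpl in *; try contradiction.
  - apply (Hbound x); lra.
  - apply (Hbound 0); lra.
Qed.

Lemma w_tilde_0 A : w_tilde A 0 = 0.
Proof. change (Rmin (wlim A 0) 0 = 0). rewrite wlim_0. apply Rmin_left. lra. Qed.

Section Constants.

Variables (A A0 x0 eta : R).
Hypothesis A_pos : 0 < A.
Hypothesis A0_pos : 0 < A0.
Hypothesis x0_nonpos : x0 <= 0.
Hypothesis beta_pos : 0 < (1 + A) * exp x0 - (1 - A).
Hypothesis eta_pos : 0 < eta.

(* [m] is the slope of [w] guaranteed on [[-tau, 0]]; [W <= - kappa <= - 2 etab] on
   [[x0, - tau]]; [Phi_eps (w x) <= - q] once [x <= - Tq]; [muI] bounds [K^2 + r^2]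
   everywhere and [mus] where [Phi_eps w <= - q]; [theta] and [ks] make the Gronwall
   budget of [apriori_bound] hold. *)
Let MW := A * exp (- x0).
Let M := MW + 1.
Let CD := 2 + M + MW.
Let m := Rmin A A0 / 4.
Let tau := Rmin 1 (m / (3 * (A + 1) + CD)).
Let kappa := (1 - exp (- tau)) * ((1 + A) * exp x0 - (1 - A)) / 2.
Let etab := Rmin eta (Rmin (kappa / 2) 1).
Let muI := 9 * (A - A0) ^ 2 + (2 + 2 * M) ^ 2.
Let theta := etab ^ 2 / (2 * (muI + 1) * exp (- 4 * x0)).
Let T1 := Rmin tau (ln (1 + theta) / 4).
Let q := Rmin 1 (Rmin (m * T1 / 3) (etab / 3)).
Let Tq := 3 * q ^ 2 / m.
Let ks := etab * exp (2 * x0) / 2.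
Let mus := 2 * ks ^ 2.

Lemma MW_nonneg : 0 <= MW.
Proof. unfold MW. assert (H := exp_pos (- x0)). nra. Qed.

Lemma m_pos : 0 < m.
Proof. unfold m. assert (H := Rmin_pos A A0 A_pos A0_pos). lra. Qed.

Lemma muI_nonneg : 0 <= muI.
Proof.
  unfold muI. assert (H1 := pow2_ge_0 (A - A0)). assert (H2 := pow2_ge_0 (2 + 2 * M)). lra.
Qed.

Lemma tau_bounds : 0 < tau <= 1 /\ (3 * (A + 1) + CD) * tau <= m.
Proof.
  assert (Hm := m_pos). assert (HMW := MW_nonneg).
  assert (HC : 0 < 3 * (A + 1) + CD) by (unfold CD, M; lra).
  unfold tau.
  split; [split; [apply Rmin_pos; [lra | apply Rdiv_lt_0_compat; auto] | apply Rmin_l]|].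
  apply Rle_trans with ((3 * (A + 1) + CD) * (m / (3 * (A + 1) + CD)));
    [apply Rmult_le_compat_l; [lra | apply Rmin_r] | right; field; lra].
Qed.

Lemma etab_bounds : 0 < etab /\ etab <= eta /\ 2 * etab <= kappa /\ etab <= 1.
Proof.
  destruct tau_bounds as [[Ht _] _].
  assert (Hk : 0 < kappa).
  { unfold kappa. assert (exp (- tau) < 1) by (rewrite <- exp_0; apply exp_increasing; lra).
    apply Rdiv_lt_0_compat; [apply Rmult_lt_0_compat|]; lra. }
  unfold etab. assert (H1 := Rmin_l eta (Rmin (kappa / 2) 1)).
  assert (H2 := Rmin_r eta (Rmin (kappa / 2) 1)).
  assert (H3 := Rmin_l (kappa / 2) 1). assert (H4 := Rmin_r (kappa / 2) 1).
  repeat split; try lra. repeat apply Rmin_pos; lra.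
Qed.

Lemma Tq_bounds : 0 < q <= 1 /\ 0 < Tq <= tau /\ m * Tq = 3 * q ^ 2 /\ m * Tq <= etab /\
  exp (4 * Tq) <= 1 + theta.
Proof.
  assert (Hm := m_pos). destruct tau_bounds as [[Ht _] _].
  destruct etab_bounds as (He & _).
  assert (Hth : 0 < theta).
  { unfold theta. apply Rdiv_lt_0_compat; [nra|].
    assert (0 < exp (- 4 * x0)) by apply exp_pos.
    assert (HmuI := muI_nonneg). nra. }
  assert (HT1 : 0 < T1 <= tau /\ 4 * T1 <= ln (1 + theta)).
  { assert (0 < ln (1 + theta)) by (rewrite <- ln_1; apply ln_increasing; lra).
    assert (Hr := Rmin_r tau (ln (1 + theta) / 4)).
    unfold T1. split; [split; [apply Rmin_pos | apply Rmin_l] |]; lra. }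
  assert (Hq : 0 < q <= 1 /\ q <= m * T1 / 3 /\ q <= etab / 3).
  { unfold q. assert (H1 := Rmin_l 1 (Rmin (m * T1 / 3) (etab / 3))).
    assert (H2 := Rmin_r 1 (Rmin (m * T1 / 3) (etab / 3))).
    assert (H3 := Rmin_l (m * T1 / 3) (etab / 3)). assert (H4 := Rmin_r (m * T1 / 3) (etab / 3)).
    repeat split; try lra. repeat apply Rmin_pos; nra. }
  assert (HmT : m * Tq = 3 * q ^ 2) by (unfold Tq; field; lra).
  assert (HTq : Tq <= T1) by (apply (Rmult_le_reg_l m); nra).
  repeat split; try lra.
  - unfold Tq. apply Rdiv_lt_0_compat; nra.
  - nra.
  - rewrite <- (exp_ln (1 + theta)) by lra. apply exp_le. lra.
Qed.

Lemma wlim_bound_holds y : x0 <= y <= 0 -> Rabs (wlim A y) + etab <= M.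
Proof.
  intros Hy. assert (H := wlim_abs_le A x0 y A_pos beta_pos Hy).
  destruct etab_bounds as (_ & _ & _ & He). unfold M, MW in *. lra.
Qed.

Lemma source_bound_holds eps u y : 0 < eps -> Rabs u <= M -> x0 <= y <= 0 ->
  Rabs (source eps (Phi_eps eps u) + 1 + wlim A y) <= CD.
Proof.
  intros He Hu Hy.
  assert (H1 := source_abs_le eps He (Phi_eps eps u)).
  assert (H2 := Phi_eps_sq_le_abs eps He u).
  assert (H3 := wlim_abs_le A x0 y A_pos beta_pos Hy).
  assert (H4 := Rabs_triang (source eps (Phi_eps eps u) + 1) (wlim A y)).
  assert (H5 := Rabs_triang (source eps (Phi_eps eps u)) 1).
  rewrite Rabs_R1 in H5. unfold CD, MW in *. lra.
Qed.

Lemma dwlim_near_0_holds y : - tau <= y <= 0 -> Rabs (dwlim A y - A) + CD * (- y) <= m.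
Proof.
  intros Hy. destruct tau_bounds as [[Ht Ht1] Htm].
  assert (H := dwlim_sub_abs_le A y ltac:(lra) ltac:(lra)).
  assert (HC : 0 <= 3 * (A + 1) + CD) by (unfold CD, M; assert (H' := MW_nonneg); lra).
  assert ((3 * (A + 1) + CD) * (- y) <= (3 * (A + 1) + CD) * tau) by (apply Rmult_le_compat_l; lra).
  lra.
Qed.

Lemma wlim_far_holds y : x0 <= y <= - tau -> wlim A y <= - (2 * etab).
Proof.
  intros Hy. destruct tau_bounds as [[Ht _] _]. destruct etab_bounds as (_ & _ & Hk & _).
  assert (H := wlim_le_neg A x0 y tau A_pos beta_pos ltac:(lra) Hy). fold kappa in H. lra.
Qed.

Lemma gronwall_budget_holds :
  (muI / 4 * (exp (4 * Tq) - 1) + mus / 4) * exp (- 4 * x0) <= etab ^ 2 / 4.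
Proof.
  destruct Tq_bounds as (_ & [HTq _] & _ & _ & Hexp).
  assert (Hx := exp_pos (- 4 * x0)).
  assert (HmuI := muI_nonneg).
  assert (H1 : muI / 4 * (exp (4 * Tq) - 1) * exp (- 4 * x0) <= etab ^ 2 / 8).
  { apply Rle_trans with (muI / 4 * theta * exp (- 4 * x0)).
    - apply Rmult_le_compat_r; [lra|]. apply Rmult_le_compat_l; lra.
    - replace (muI / 4 * theta * exp (- 4 * x0)) with (etab ^ 2 / 8 * (muI / (muI + 1)))
        by (unfold theta; field; split; lra).
      assert (muI / (muI + 1) <= 1) by (apply Rle_div_l; lra).
      assert (0 <= etab ^ 2) by apply pow2_ge_0. nra. }
  assert (H2 : mus / 4 * exp (- 4 * x0) = etab ^ 2 / 8).
  { unfold mus, ks.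
    assert (Hm : exp (2 * x0) * exp (2 * x0) * exp (- 4 * x0) = 1)
      by (rewrite <- !exp_plus; replace (2 * x0 + 2 * x0 + - 4 * x0) with 0 by ring; apply exp_0).
    replace (2 * (etab * exp (2 * x0) / 2) ^ 2 / 4 * exp (- 4 * x0))
      with (etab ^ 2 / 8 * (exp (2 * x0) * exp (2 * x0) * exp (- 4 * x0))) by field.
    rewrite Hm. ring. }
  lra.
Qed.

Lemma eventually_slope_bound : at_right 0 (fun eps => forall u, Rabs u <= M -> u <= 0 ->
  2 * m <= A + drift_error A A0 eps (Phi_eps eps u)).
Proof.
  assert (HM : 0 <= M + 1) by (unfold M; assert (H := MW_nonneg); lra).
  apply (filter_imp (fun eps => 0 < eps < 1 /\ forall p, p <= 0 -> Rabs p <= M + 1 ->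
                                  Rmin A A0 / 2 <= A + drift_error A A0 eps p)).
  - intros eps [He H] u Hu Hu0. unfold m.
    assert (H' := H (Phi_eps eps u) (Phi_eps_nonpos eps ltac:(lra) u Hu0)
                    (Phi_eps_abs_le eps ltac:(lra) M u Hu)). lra.
  - apply filter_and; [apply eventually_eps_small | apply eventually_drift_error_ge; auto].
Qed.

Lemma eventually_Phi_far :
  at_right 0 (fun eps => forall u, u <= - (m * Tq) -> Phi_eps eps u <= - q).
Proof.
  destruct Tq_bounds as ([Hq _] & _ & HmT & _). rewrite HmT.
  apply eventually_Phi_eps_le_opp; auto.
Qed.

Lemma eventually_errors_bound : at_right 0 (fun eps => forall u, Rabs u <= M ->
  drift_error A A0 eps (Phi_eps eps u) ^ 2 + source_error eps u ^ 2 <= muI).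
Proof.
  assert (HM : 0 <= M + 1) by (unfold M; assert (H := MW_nonneg); lra).
  apply (filter_imp (fun eps => 0 < eps < 1 /\ forall p, Rabs p <= M + 1 ->
                                  Rabs (drift_error A A0 eps p) <= 3 * Rabs (A - A0))).
  - intros eps [He H] u Hu.
    assert (HK := H (Phi_eps eps u) (Phi_eps_abs_le eps ltac:(lra) M u Hu)).
    assert (Hr := source_error_abs_le_crude eps ltac:(lra) u).
    apply (pow_maj_Rabs _ _ 2) in HK. apply (pow_maj_Rabs _ _ 2) in Hr.
    assert (2 + 2 * Rabs u <= 2 + 2 * M) by lra.
    assert ((2 + 2 * Rabs u) ^ 2 <= (2 + 2 * M) ^ 2)
      by (apply pow_incr; assert (Hu0 := Rabs_pos u); lra).
    unfold muI. rewrite <- (pow2_abs (A - A0)). lra.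
  - apply filter_and; [apply eventually_eps_small | apply eventually_drift_error_bounded; auto].
Qed.

Lemma eventually_errors_small : at_right 0 (fun eps => forall u, Rabs u <= M ->
  Phi_eps eps u <= - q ->
  drift_error A A0 eps (Phi_eps eps u) ^ 2 + source_error eps u ^ 2 <= mus).
Proof.
  assert (HM : 0 <= M + 1) by (unfold M; assert (H := MW_nonneg); lra).
  destruct Tq_bounds as ([Hq _] & _).
  assert (Hks : 0 < ks) by (unfold ks; destruct etab_bounds as [He _];
                            assert (H := exp_pos (2 * x0)); nra).
  apply (filter_imp (fun eps => 0 < eps < 1 /\
    (forall p, p <= - q -> Rabs p <= M + 1 -> Rabs (drift_error A A0 eps p) <= ks) /\
    (forall v, Phi_eps eps v <= - q -> Rabs (Phi_eps eps v) <= M + 1 ->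
       Rabs (source_error eps v) <= ks))).
  - intros eps (He & HK & Hr) u Hu Hpq.
    assert (HPu := Phi_eps_abs_le eps ltac:(lra) M u Hu).
    assert (H1 := pow_maj_Rabs _ _ 2 (HK _ Hpq HPu)).
    assert (H2 := pow_maj_Rabs _ _ 2 (Hr _ Hpq HPu)).
    unfold mus. lra.
  - apply filter_and; [apply eventually_eps_small | apply filter_and].
    + apply eventually_drift_error_small; auto.
    + apply eventually_source_error_small; auto.
Qed.

Lemma eventually_close_to_w_tilde : at_right 0 (fun eps =>
  forall a w dw ddw, is_shooting_solution A A0 eps a w dw ddw ->
  Rbar_lt a x0 /\ forall x, x0 <= x <= 0 -> Rabs (w x - w_tilde A x) < eta).
Proof.
  apply (filter_imp (fun eps => 0 < eps < 1 /\
           ((forall u, Rabs u <= M -> u <= 0 ->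
               2 * m <= A + drift_error A A0 eps (Phi_eps eps u)) /\
            (forall u, u <= - (m * Tq) -> Phi_eps eps u <= - q)) /\
           ((forall u, Rabs u <= M ->
               drift_error A A0 eps (Phi_eps eps u) ^ 2 + source_error eps u ^ 2 <= muI) /\
            (forall u, Rabs u <= M -> Phi_eps eps u <= - q ->
               drift_error A A0 eps (Phi_eps eps u) ^ 2 + source_error eps u ^ 2 <= mus)))).
  2:{ apply filter_and; [apply eventually_eps_small|].
       apply filter_and; apply filter_and; auto using eventually_slope_bound,
         eventually_Phi_far, eventually_errors_bound, eventually_errors_small. }
  intros eps (He & (Hslope & HPhi) & (HmuI & Hmus)) a w dw ddw Hsol.
  destruct etab_bounds as (Hetab & Heta & _).
  destruct Tq_bounds as (_ & HTq & _ & HmTq & _).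
  assert (Hclose : forall t : R, Rbar_lt a t -> x0 <= t <= 0 ->
            forall y, t <= y <= 0 -> Rabs (w y - wlim A y) <= etab / 2).
  { destruct Hsol as (_ & Hw0 & Hwl & Hdwl & Hode & _).
    apply (apriori_bound A A0 eps a w dw ddw) with (tau := tau) (Tq := Tq) (q := q) (m := m)
      (M := M) (CD := CD) (muI := muI) (mus := mus); auto using m_pos, wlim_bound_holds,
      dwlim_near_0_holds, wlim_far_holds, gronwall_budget_holds, muI_nonneg; try lra.
    - exact Hode.
    - unfold mus. assert (H := pow2_ge_0 ks). lra.
    - intros u y Hu Hy. apply source_bound_holds; auto; lra. }
  assert (Hax0 : Rbar_lt a x0).
  { apply (shooting_lower_end_lt A A0 eps a w dw ddw x0 M); auto.
    intros t Hat Ht y Hy. assert (H := Hclose t Hat Ht y Hy).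
    assert (HW := wlim_bound_holds y ltac:(lra)).
    replace (w y) with ((w y - wlim A y) + wlim A y) by ring.
    eapply Rle_trans; [apply Rabs_triang | lra]. }
  split; auto. intros x Hx.
  rewrite (w_tilde_eq_wlim A x0 x) by auto.
  assert (H := Hclose x0 Hax0 ltac:(lra) x Hx). lra.
Qed.

End Constants.

(* In [cloc_conv] the left end [x0] ranges over [Rbar] and is coerced to [R] by [real];
   [x0 = p_infty] degenerates to the compact [[0, 0]]. *)
Lemma cloc_conv_w_tilde A A0 (L : Rbar) a w dw ddw : 0 < A -> 0 < A0 ->
  (forall eps, 0 < eps < 1 ->
     is_shooting_solution A A0 eps (a eps) (w eps) (dw eps) (ddw eps)) ->
  (forall x0 : R, Rbar_lt L x0 -> x0 <= 0 -> 0 < (1 + A) * exp x0 - (1 - A)) ->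
  cloc_conv L a w (w_tilde A).
Proof.
  intros HA HA0 Hsol Hbeta [x0| |] HLx0 Hx0 eta Heta; simpl in Hx0.
  - destruct (at_right_ex_delta _ (eventually_close_to_w_tilde A A0 x0 eta HA HA0 Hx0
                                    (Hbeta x0 HLx0 Hx0) Heta)) as [delta [Hdelta Hclose]].
    exists delta. split; auto. intros eps He0 He1 Hed.
    apply (Hclose eps ltac:(lra) (a eps) (w eps) (dw eps) (ddw eps)), Hsol. lra.
  - exists 1. split; [lra|]. intros eps He0 He1 _.
    destruct (Hsol eps ltac:(lra)) as (Ha & Hw0 & _). split.
    + destruct (a eps); simpl in *; auto.
    + intros x Hx. simpl in Hx. replace x with 0 by lra.
      rewrite Hw0, w_tilde_0, Rminus_0_r, Rabs_R0. lra.
  - destruct L; contradiction.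
Qed.

Theorem corollary4p2 (A A0 : R) (a : R -> Rbar) (w dw ddw : R -> R -> R) :
  0 < A -> 0 < A0 ->
  (forall eps, 0 < eps < 1 ->
     is_shooting_solution A A0 eps (a eps) (w eps) (dw eps) (ddw eps)) ->
  (A < 1 -> cloc_conv (Finite (- ln ((1 + A) / (1 - A)))) a w (w_tilde A)) /\
  (1 < A -> cloc_conv m_infty a w (w_tilde A)).
Proof.
  intros HA HA0 Hsol. split; intros HA1; apply (cloc_conv_w_tilde A A0 _ a w dw ddw); auto.
  - intros x0 Hx0 _. simpl in Hx0.
    assert (Hr : 0 < (1 + A) / (1 - A)) by (apply Rdiv_lt_0_compat; lra).
    apply exp_increasing in Hx0.
    rewrite exp_Ropp, exp_ln in Hx0 by auto.
    replace (/ ((1 + A) / (1 - A))) with ((1 - A) / (1 + A)) in Hx0 by (field; lra).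
    apply Rlt_div_l in Hx0; lra.
  - intros x0 _ _. assert (H := exp_pos x0). nra.
Qed.
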